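(* For all integers $n\ge 4$, $m\ge 2$ and $k\in\{2,\ldots,n-2\}$, $$\chi_{\mu_k}(P_n\boxtimes K_m)=\begin{cases}2\lfloor\frac{n}{k+2}\rfloor & \text{if } n\equiv 0 \pmod{k+2},\\ 2\lfloor\frac{n}{k+2}\rfloor+1 & \text{if } n\equiv 1,2 \pmod{k+2},\\ 2\lfloor\frac{n}{k+2}\rfloor+2 & \text{otherwise.}\end{cases}$$
   Context: $P_n$ is the path on $n$ vertices and $K_m$ the complete graph. The strong product $G\boxtimes H$ has vertex set $V(G)\times V(H)$, with distinct $(g,h),(g',h')$ adjacent iff ($g=g'$ or $gg'\in E(G)$) and ($h=h'$ or $hh'\in E(H)$). For a positive integer $k$, a set $M\subseteq V(X)$ is a $k$-distance mutual-visibility set if for every two vertices $u,v\in M$ there exists a shortest $u,v$-path of length at most $k$ none of whose internal vertices lies in $M$. $\chi_{\mu_k}(X)$ is the minimum cardinality of a partition of $V(X)$ into $k$-distance mutual-visibility sets. *)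

From mathcomp Require Import all_boot.
Set Implicit Arguments. Unset Strict Implicit. Unset Printing Implicit Defensive.

Definition path_adj (n : nat) : rel 'I_n :=
  fun i j => (i.+1 == j :> nat) || (j.+1 == i :> nat).

Definition complete_adj (m : nat) : rel 'I_m := fun i j => i != j.

Definition strong_adj (T1 T2 : finType) (e1 : rel T1) (e2 : rel T2)
  : rel (T1 * T2) :=
  fun x y => [&& x != y, (x.1 == y.1) || e1 x.1 y.1 & (x.2 == y.2) || e2 x.2 y.2].

(* A u,v-walk is a sequence p with path e u p and last u p = v; its length is
   size p.  A shortest u,v-path is a u,v-walk of minimal length. *)
Definition is_walk (T : finType) (e : rel T) (u v : T) (p : seq T) : Prop :=
  path e u p /\ last u p = v.

Definition is_shortest_path (T : finType) (e : rel T) (u v : T) (p : seq T) : Prop :=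
  is_walk e u v p /\ (forall q, is_walk e u v q -> size p <= size q).

Definition internal (T : Type) (p : seq T) : seq T := take (size p).-1 p.

Definition kdist_mv_set (T : finType) (e : rel T) (k : nat) (M : {set T}) : Prop :=
  forall u v, u \in M -> v \in M -> u != v ->
    exists p, [/\ is_shortest_path e u v p, size p <= k &
                  all (fun x => x \notin M) (internal p)].

Definition kdist_mv_partition (T : finType) (e : rel T) (k : nat)
  (P : {set {set T}}) : Prop :=
  partition P [set: T] /\ forall B, B \in P -> kdist_mv_set e k B.

Definition is_chi_mu (T : finType) (e : rel T) (k c : nat) : Prop :=
  (exists P, kdist_mv_partition e k P /\ #|P| = c) /\
  (forall P, kdist_mv_partition e k P -> c <= #|P|).

Definition PK_adj (n m : nat) : rel ('I_n * 'I_m) :=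
  strong_adj (@path_adj n) (@complete_adj m).

Definition chi_formula (n k : nat) : nat :=
  let q := n %/ (k + 2) in
  let r := n %% (k + 2) in
  if r == 0 then 2 * q
  else if (r == 1) || (r == 2) then 2 * q + 1
  else 2 * q + 2.

(* In P_n ⊠ K_m a shortest path between rows i < j visits each row strictly
   between them exactly once, so a set M is a k-distance mutual-visibility set
   iff any two of its vertices lie at most k rows apart and no row strictly
   between two of its vertices is contained in M.  Hence the row spans of the
   blocks of such a partition are intervals of length at most k covering all n
   rows, and each row inside a span meets a second block.  Following the block
   that meets the last row, either the last two rows can be removed at the cost
   of one block, or two blocks lie in the last k + 2 rows and these rows can be
   removed at the cost of two blocks; induction gives the lower bound.  For the
   upper bound the rows are cut into stripes of k + 2 consecutive rows, and each
   stripe is split into at most two classes. *)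

From mathcomp Require Import all_boot order zify.

Set Implicit Arguments.
Unset Strict Implicit.
Unset Printing Implicit Defensive.

Import Order.TTheory.

Lemma chi_formulaE q r k : r < k + 2 ->
  chi_formula (q * (k + 2) + r) k = 2 * q + (0 < r) + (2 < r).
Proof.
move=> ltrk; rewrite /chi_formula divnMDl ?modnMDl ?divn_small ?modn_small //; last lia.
by case: r ltrk => [|[|[|r]]] /=; lia.
Qed.

Lemma chi_formula_subk2 n k : chi_formula n k <= chi_formula (n - (k + 2)) k + 2.
Proof.
have ltrk : n %% (k + 2) < k + 2 by rewrite ltn_mod addn2.
rewrite (divn_eq n (k + 2)); case: (n %/ (k + 2)) => [|q].
  have -> : 0 * (k + 2) + n %% (k + 2) - (k + 2) = 0 * (k + 2) + 0 by lia.
  by rewrite !chi_formulaE //; lia.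
have -> : q.+1 * (k + 2) + n %% (k + 2) - (k + 2) = q * (k + 2) + n %% (k + 2).
  by rewrite mulSn; lia.
by rewrite !chi_formulaE //; lia.
Qed.

Lemma chi_formula_sub2 n k : 2 <= k -> chi_formula n k <= chi_formula (n - 2) k + 1.
Proof.
move=> k2; have ltrk : n %% (k + 2) < k + 2 by rewrite ltn_mod addn2.
rewrite (divn_eq n (k + 2)); move: (n %/ (k + 2)) (n %% (k + 2)) ltrk => q r ltrk.
have [le2r | ltr2] := leqP 2 r.
  have -> : q * (k + 2) + r - 2 = q * (k + 2) + (r - 2) by lia.
  by rewrite !chi_formulaE //; lia.
case: q => [|q].
  have -> : 0 * (k + 2) + r - 2 = 0 * (k + 2) + 0 by lia.
  by rewrite !chi_formulaE //; lia.
have -> : q.+1 * (k + 2) + r - 2 = q * (k + 2) + (k + r) by rewrite mulSn; lia.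
by rewrite !chi_formulaE //; lia.
Qed.

Section IntervalCover.
Variables (T : finType) (lo hi : T -> nat) (k : nat).

Definition interval_cover (n : nat) (A : {set T}) : Prop :=
  [/\ forall j, j < n -> exists2 i, i \in A & lo i <= j <= hi i,
      forall i, i \in A -> hi i <= lo i + k &
      forall i j, i \in A -> lo i < j < hi i -> j.+1 < n ->
        exists2 i', i' \in A :\ i & lo i' <= j <= hi i'].

Lemma interval_cover_restrict n n0 A : n0 <= n -> interval_cover n A ->
  interval_cover n0 (A :&: [set i | lo i < n0]).
Proof.
move=> len0 [cov short inner]; split.
- move=> j ltjn0; have [|i iA /andP[loj jhi]] := cov j; first lia.
  by exists i; rewrite ?inE ?iA ?loj ?jhi //=; lia.
- by move=> i /setIP[/short].
- move=> i j /setIP[iA _] loji ltjn0.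
  have [|i' /setD1P[ne i'A] /andP[loj jhi]] := inner i j iA loji; first lia.
  by exists i'; rewrite ?inE ?ne ?i'A ?loj ?jhi //=; lia.
Qed.

Hypothesis k2 : 2 <= k.

Lemma chi_formula_le_interval_cover n A :
  interval_cover n A -> chi_formula n k <= #|A|.
Proof.
elim/ltn_ind: n A => n IH A cover.
have split_at n0 : n0 < n -> chi_formula n0 k + #|A :\: [set i | lo i < n0]| <= #|A|.
  move=> ltn0n; rewrite -(cardsID [set i | lo i < n0] A) leq_add2r.
  exact: IH n0 ltn0n _ (interval_cover_restrict (ltnW ltn0n) cover).
case: n IH cover split_at => [|n] _ [cov short inner] split_at.
  by rewrite /chi_formula div0n mod0n.
have [I IA /andP[loI hiI]] := cov n (ltnSn n).
have [le_n2_loI | lt_loI_n2] := leqP n.-1 (lo I).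
  have I_late : I \in A :\: [set i | lo i < n.+1 - 2] by rewrite !inE IA -leqNgt; lia.
  have one_late : 0 < #|A :\: [set i | lo i < n.+1 - 2]| by apply/card_gt0P; exists I.
  have := split_at (n.+1 - 2) (leq_subr _ _).
  have := @chi_formula_sub2 n.+1 k k2; lia.
have [J /setD1P[neJI JA] /andP[loJ hiJ]] :
    exists2 J, J \in A :\ I & lo J <= n.-1 <= hi J.
  by apply: inner IA _ _; lia.
have two_late : 2 <= #|A :\: [set i | lo i < n.+1 - (k + 2)]|.
  apply: leq_trans (subset_leq_card (_ : [set I; J] \subset _)).
    by rewrite cards2 eq_sym neJI.
  apply/subsetP => i.
  have := short I IA; have := short J JA.
  by rewrite !inE => ? ? /orP[]/eqP->; rewrite ?IA ?JA -leqNgt; lia.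
have lt_n0 : n.+1 - (k + 2) < n.+1 by lia.
have := split_at _ lt_n0; have := chi_formula_subk2 n.+1 k; lia.
Qed.
End IntervalCover.

(* A stripe of [w] rows, [s] being the row inside the stripe and [a] the
   column: if [w <= 2] the whole stripe is one class; otherwise class [false]
   is the first row together with column 0 of the inner rows, and class [true]
   is the last row together with the other columns of the inner rows. *)
Definition stripe_bit (w s a : nat) : bool :=
  [&& 2 < w, 0 < s & (s == w.-1) || (a != 0)].

Lemma stripe_bit_visible k w s1 s2 a1 a2 : 0 < k -> w <= k + 2 -> s1 < s2 < w ->
  stripe_bit w s1 a1 = stripe_bit w s2 a2 ->
  s2 <= s1 + k /\ forall s, s1 < s < s2 ->
    exists2 a, a < 2 & stripe_bit w s a != stripe_bit w s1 a1.
Proof.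
rewrite /stripe_bit => k_gt0 wk /andP[s12 s2w].
case: (leqP w 2) => [w2 _ | w3 /=]; first by split=> [|s]; lia.
case: (boolP [&& 0 < s1 & _]) => b1 /esym b2; split; try lia.
- by move=> s ss; exists 0 => //=; lia.
- by move=> s ss; exists 1 => //=; lia.
Qed.

Definition stripe_color (n k i a : nat) : nat :=
  let t := i %/ (k + 2) in
  2 * t + stripe_bit (minn (k + 2) (n - t * (k + 2))) (i %% (k + 2)) a.

Lemma stripe_colorE n k t s a : s < k + 2 ->
  stripe_color n k (t * (k + 2) + s) a =
  2 * t + stripe_bit (minn (k + 2) (n - t * (k + 2))) s a.
Proof.
by move=> ltsk; rewrite /stripe_color divnMDl ?modnMDl ?divn_small ?modn_small ?addn0 // addn2.
Qed.

Lemma stripe_color_lt n k i a : i < n -> stripe_color n k i a < chi_formula n k.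
Proof.
have ltd x : x %% (k + 2) < k + 2 by rewrite ltn_mod addn2.
have En := divn_eq n (k + 2); rewrite (divn_eq i (k + 2)) => ltin.
rewrite stripe_colorE // {2}En chi_formulaE //.
move: (i %/ _) (i %% _) (n %/ _) (n %% _) (ltd i) (ltd n) En ltin.
move=> t s q r ltsd ltrd En ltin.
have [lt_tq | lt_qt | eq_tq] := ltngtP t q.
- have : t.+1 * (k + 2) <= q * (k + 2) by rewrite leq_mul2r lt_tq orbT.
  by rewrite mulSn; case: (stripe_bit _ _ _); lia.
- have : q.+1 * (k + 2) <= t * (k + 2) by rewrite leq_mul2r lt_qt orbT.
  by rewrite mulSn; lia.
- by subst t; rewrite /stripe_bit; lia.
Qed.

Lemma stripe_color_visible n k i j a b : 0 < k -> i < j < n ->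
  stripe_color n k i a = stripe_color n k j b ->
  j <= i + k /\ forall x, i < x < j ->
    exists2 c, c < 2 & stripe_color n k x c != stripe_color n k i a.
Proof.
move=> k_gt0 /andP[lt_ij lt_jn].
have ltd x : x %% (k + 2) < k + 2 by rewrite ltn_mod addn2.
have colorE x c : stripe_color n k x c = 2 * (x %/ (k + 2)) +
    stripe_bit (minn (k + 2) (n - x %/ (k + 2) * (k + 2))) (x %% (k + 2)) c.
  by rewrite {1}(divn_eq x (k + 2)) stripe_colorE.
rewrite !colorE => same_color.
have tj : j %/ (k + 2) = i %/ (k + 2).
  by move: same_color; do 2 case: (stripe_bit _ _ _); lia.
have tx x : i <= x <= j -> x %/ (k + 2) = i %/ (k + 2).
  case/andP=> ix xj.
  by have := leq_div2r (k + 2) ix; have := leq_div2r (k + 2) xj; lia.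
have Ediv x : i <= x <= j -> x = i %/ (k + 2) * (k + 2) + x %% (k + 2).
  by move=> /tx <-; apply: divn_eq.
have Ei : i = i %/ (k + 2) * (k + 2) + i %% (k + 2) by apply: divn_eq.
have Ej : j = i %/ (k + 2) * (k + 2) + j %% (k + 2) by rewrite -tj; apply: divn_eq.
rewrite tj in same_color.
set t := i %/ (k + 2) in tx Ediv Ei Ej same_color *.
set w := minn (k + 2) (n - t * (k + 2)) in same_color *.
have lt_s : i %% (k + 2) < j %% (k + 2) < w by have := ltd j; rewrite /w; lia.
have eq_bit : stripe_bit w (i %% (k + 2)) a = stripe_bit w (j %% (k + 2)) b.
  by move: same_color; do 2 case: (stripe_bit _ _ _); lia.
have [near gaps] := stripe_bit_visible k_gt0 (geq_minl _ _) lt_s eq_bit.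
split=> [|x /andP[ix xj]]; first lia.
have ijx : i <= x <= j by rewrite (ltnW ix) (ltnW xj).
have [|c c2 neq] := gaps (x %% (k + 2)); first by have := Ediv x ijx; lia.
exists c => //; rewrite colorE tx // eqn_add2l.
by move: neq; do 2 case: (stripe_bit _ _ _).
Qed.

Lemma internal_rcons (T : Type) (s : seq T) x : internal (rcons s x) = s.
Proof. by rewrite /internal size_rcons -cats1 take_size_cat. Qed.

Lemma internal_rev_belast (T : Type) (u : T) p :
  internal (rev (belast u p)) = rev (internal p).
Proof.
by case/lastP: p => [|p y] //; rewrite belast_rcons rev_cons !internal_rcons.
Qed.

Section Walks.
Variables (T : finType) (e : rel T).

Section Height.
Variable h : T -> nat.
Hypothesis h_step : forall x y, e x y -> h y <= (h x).+1.

Lemma path_height_le x p : path e x p -> h (last x p) <= h x + size p.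
Proof.
elim: p x => [|y p IH] x /=; first by rewrite addn0.
by case/andP=> /h_step exy /IH; rewrite addnS; lia.
Qed.

Lemma path_height_ivt x p j : path e x p -> h x < j < h (last x p) ->
  exists2 y, y \in internal p & h y = j.
Proof.
elim: p x => [|y p IH] x /=; first lia.
case/andP=> /h_step exy yp xjy.
case: p IH yp xjy => [|z p] IH yp /= xjy; first lia.
have [hyj | hyj] := eqVneq (h y) j.
  by exists y; rewrite /internal /= ?inE ?eqxx.
have [|y' y'p <-] := IH y yp; first by rewrite /=; lia.
by exists y'; rewrite // /internal /= inE y'p orbT.
Qed.

End Height.

Hypothesis e_sym : symmetric e.

Lemma walk_rev u v p : is_walk e u v p -> is_walk e v u (rev (belast u p)).
Proof.
case=> pw <-; split; first by rewrite rev_path (eq_path (fun x y => e_sym y x)).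
by case: p pw => [|y p] //= _; rewrite rev_cons last_rcons.
Qed.

Lemma shortest_path_rev u v p :
  is_shortest_path e u v p -> is_shortest_path e v u (rev (belast u p)).
Proof.
case=> pw pmin; split; first exact: walk_rev.
by move=> q /walk_rev/pmin; rewrite !size_rev !size_belast.
Qed.

(* [kdist_mv_set e k M] unfolds to: [visible_in k M u v] for all distinct [u], [v] in [M]. *)
Definition visible_in (k : nat) (M : {set T}) (u v : T) : Prop :=
  exists p, [/\ is_shortest_path e u v p, size p <= k &
                all (fun x => x \notin M) (internal p)].

Lemma visible_in_sym k M u v : visible_in k M u v -> visible_in k M v u.
Proof.
case=> p [sp pk pM]; exists (rev (belast u p)); split.
- exact: shortest_path_rev.
- by rewrite size_rev size_belast.
- by rewrite internal_rev_belast all_rev.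
Qed.

End Walks.

Lemma strong_adj_sym (T1 T2 : finType) (e1 : rel T1) (e2 : rel T2) :
  symmetric e1 -> symmetric e2 -> symmetric (strong_adj e1 e2).
Proof.
by move=> e1s e2s x y; rewrite /strong_adj eq_sym (eq_sym x.1) (eq_sym x.2) e1s e2s.
Qed.

Lemma path_adj_sym n : symmetric (@path_adj n).
Proof. by move=> i j; rewrite /path_adj orbC. Qed.

Lemma complete_adj_sym m : symmetric (@complete_adj m).
Proof. by move=> i j; rewrite /complete_adj eq_sym. Qed.

Section StrongProduct.
Variables n m : nat.
Local Notation V := ('I_n * 'I_m)%type.
Local Notation e := (@PK_adj n m).

Lemma PK_adj_sym : symmetric e.
Proof. exact: strong_adj_sym (@path_adj_sym n) (@complete_adj_sym m). Qed.

Lemma PK_adj_row_step (x y : V) : e x y -> y.1 <= x.1.+1.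
Proof.
by rewrite /PK_adj /strong_adj /path_adj => /and3P[_ /orP[/eqP->|/orP[]/eqP<-] _] /=; lia.
Qed.

Lemma PK_adj_next_row (x y : V) : x.1.+1 = y.1 :> nat -> e x y.
Proof.
move=> xy; have neq : x != y by apply/eqP => exy; move: xy; rewrite exy; lia.
by rewrite /PK_adj /strong_adj /path_adj /complete_adj neq xy eqxx orbT orbN.
Qed.

Lemma PK_adj_same_row (x y : V) : x.1 = y.1 -> x != y -> e x y.
Proof. by move=> xy neq; rewrite /PK_adj /strong_adj /complete_adj neq xy eqxx orbN. Qed.

(* The default row [d] of [insubd] is never used, since all rows visited are below [n]. *)
Definition row_walk (col : 'I_n -> 'I_m) (d : 'I_n) (i len : nat) : seq V :=
  [seq (insubd d j, col (insubd d j)) | j <- iota i len].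

Lemma row_walk_path col d (x : V) len : x.1 + len < n ->
  let p := row_walk col d x.1.+1 len in path e x p /\ (last x p).1 = x.1 + len :> nat.
Proof.
elim: len x => [|len IH] x lt_n /=; first by rewrite addn0.
set y : V := (insubd d x.1.+1, _).
have y1 : y.1 = x.1.+1 :> nat by rewrite val_insubd ifT //; lia.
have [|y_path y_last] := IH y; first by rewrite y1; lia.
rewrite y1 in y_path y_last; split; first by rewrite y_path PK_adj_next_row.
by rewrite y_last addnS.
Qed.

Lemma mem_row_walk col d i len y : i + len <= n -> y \in row_walk col d i len ->
  i <= y.1 < i + len /\ y.2 = col y.1.
Proof.
move=> le_n /mapP[j]; rewrite mem_iota => ij ->; rewrite /= val_insubd ifT //; lia.
Qed.

Definition row_visible (k : nat) (M : {set V}) : Prop :=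
  forall u v : V, u \in M -> v \in M -> u.1 < v.1 ->
    v.1 <= u.1 + k /\ forall r : 'I_n, u.1 < r < v.1 -> exists c, (r, c) \notin M.

Lemma walk_row_le (u v : V) p : is_walk e u v p -> v.1 <= u.1 + size p.
Proof.
case=> pw <-; apply: (path_height_le (h := fun x : V => val x.1)) pw.
by move=> x y /PK_adj_row_step.
Qed.

Lemma walk_row_ivt (u v : V) p j : is_walk e u v p -> u.1 < j < v.1 ->
  exists2 y, y \in internal p & y.1 = j :> nat.
Proof.
case=> pw <-; apply: (path_height_ivt (h := fun x : V => val x.1)) pw.
by move=> x y /PK_adj_row_step.
Qed.

Lemma visible_in_rows k M (u v : V) :
  row_visible k M -> u \in M -> v \in M -> u.1 < v.1 -> visible_in e k M u v.
Proof.
move=> vis uM vM lt_uv; have [near gaps] := vis u v uM vM lt_uv.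
pose col r := odflt u.2 [pick c | (r, c) \notin M].
have col_gap (r : 'I_n) : u.1 < r < v.1 -> (r, col r) \notin M.
  by move=> /gaps[c rc]; rewrite /col; case: pickP => [c' //|/(_ c)/negbT]; rewrite rc.
pose len := (v.1 - u.1).-1.
have lt_n : u.1 + len < n by have := ltn_ord v.1; lia.
have [wpath wlast] := row_walk_path col u.1 lt_n.
exists (rcons (row_walk col u.1 u.1.+1 len) v); split.
- have walk : is_walk e u v (rcons (row_walk col u.1 u.1.+1 len) v).
    by split; rewrite ?last_rcons // rcons_path wpath PK_adj_next_row // wlast; lia.
  split=> // q /walk_row_le; rewrite size_rcons size_map size_iota; lia.
- by rewrite size_rcons size_map size_iota /len; lia.
- rewrite internal_rcons; apply/allP => -[r c].
  move=> /(mem_row_walk (lt_n : u.1.+1 + len <= n)) /= [ur ->].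
  by apply: col_gap; rewrite /len in ur; lia.
Qed.

Lemma kdist_mv_setP k M : 0 < k -> kdist_mv_set e k M <-> row_visible k M.
Proof.
move=> k_gt0; split=> [vis u v uM vM lt_uv | vis u v uM vM neq].
  have neq : u != v by apply: contraTneq lt_uv => ->; rewrite ltnn.
  have [p [[pw _] pk pM]] := vis u v uM vM neq.
  split; first by have := walk_row_le pw; lia.
  move=> r /(walk_row_ivt pw)[y yp yr]; exists y.2.
  have -> : r = y.1 by apply: val_inj.
  by rewrite -surjective_pairing (allP pM).
have [lt_uv | lt_vu | eq_uv] := ltngtP u.1 v.1.
- exact: visible_in_rows.
- exact (visible_in_sym PK_adj_sym (visible_in_rows vis vM uM lt_vu)).
- exists [:: v]; split=> //; split.
    by split; rewrite //= andbT PK_adj_same_row //; apply: val_inj.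
  by case=> [[_ /= uv]|]; [rewrite uv eqxx in neq | ].
Qed.

Definition row_min (B : {set V}) : nat := \big[minn/n]_(x in B) x.1.
Definition row_max (B : {set V}) : nat := \max_(x in B) x.1.

Lemma row_min_max (B : {set V}) x : x \in B -> row_min B <= x.1 <= row_max B.
Proof.
move=> xB; apply/andP; split.
  exact: (bigmin_le_cond n (P := [in B]) (fun y : V => y.1 : nat) xB).
exact: (@leq_bigmax_cond _ [in B] (fun y : V => y.1 : nat) x xB).
Qed.

Lemma row_min_mem (B : {set V}) : B != set0 -> exists2 x, x \in B & row_min B = x.1.
Proof.
case/set0Pn=> x0 x0B.
have [x xB min_x] :=
  eq_bigmin x0 [in B] (fun y : V => y.1 : nat) x0B (fun y _ => ltnW (ltn_ord y.1)).
by exists x; last exact min_x.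
Qed.

Lemma row_max_mem (B : {set V}) : B != set0 -> exists2 x, x \in B & row_max B = x.1.
Proof.
case/set0Pn=> x0 x0B; have B_gt0 : 0 < #|B| by apply/card_gt0P; exists x0.
by have [x xB max_x] := eq_bigmax_cond (fun y : V => y.1 : nat) B_gt0; exists x.
Qed.

Lemma partition_interval_cover k P : 0 < m -> 0 < k -> kdist_mv_partition e k P ->
  interval_cover row_min row_max k n P.
Proof.
move=> m_gt0 k_gt0 [/and3P[/eqP coverP _ set0P] vis].
have pblockP (x : V) : pblock P x \in P /\ x \in pblock P x.
  have xP : x \in cover P by rewrite coverP inE.
  by rewrite pblock_mem // mem_pblock.
have row_visP B : B \in P -> row_visible k B.
  by move=> BP; apply/kdist_mv_setP/vis.
have ends B : B \in P -> exists xl xh,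
    [/\ xl \in B, xh \in B, row_min B = xl.1 & row_max B = xh.1].
  move=> BP; have B0 : B != set0 by apply: contraNneq set0P => <-.
  have [xl xlB ->] := row_min_mem B0; have [xh xhB ->] := row_max_mem B0.
  by exists xl, xh.
split.
- move=> j ltjn; have [BP xB] := pblockP (Ordinal ltjn, Ordinal m_gt0).
  by exists (pblock P (Ordinal ltjn, Ordinal m_gt0)); last exact: row_min_max xB.
- move=> B BP; have [xl [xh [xlB xhB -> ->]]] := ends B BP.
  have [lt_lh | ] := ltnP xl.1 xh.1; last lia.
  exact: (row_visP B BP xl xh xlB xhB lt_lh).1.
- move=> B j BP; have [xl [xh [xlB xhB -> ->]]] := ends B BP.
  move=> /andP[lj jh] _; have ltjn : j < n by have := ltn_ord xh.1; lia.
  have [_ gaps] := row_visP B BP xl xh xlB xhB (ltn_trans lj jh).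
  have [c jc] := gaps (Ordinal ltjn) (introT andP (conj lj jh)).
  have [B'P yB'] := pblockP (Ordinal ltjn, c).
  exists (pblock P (Ordinal ltjn, c)); last exact: row_min_max yB'.
  by rewrite !inE B'P andbT; apply: contraNneq jc => <-.
Qed.

Lemma chi_formula_le_partition k P : 0 < m -> 2 <= k -> kdist_mv_partition e k P ->
  chi_formula n k <= #|P|.
Proof.
move=> m_gt0 k2 /(partition_interval_cover m_gt0 (ltnW k2)).
exact: chi_formula_le_interval_cover.
Qed.

Definition stripe_partition k : {set {set V}} :=
  preim_partition (fun x : V => stripe_color n k x.1 x.2) [set: V].

Lemma stripe_partition_valid k :
  1 < m -> 0 < k -> kdist_mv_partition e k (stripe_partition k).
Proof.
move=> m_gt1 k_gt0; split=> [|B /imsetP[x0 _ ->]]; first exact: preim_partitionP.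
apply/kdist_mv_setP => // u v; rewrite !inE /= => /eqP x0u /eqP x0v lt_uv.
have [near gaps] := stripe_color_visible k_gt0 (introT andP (conj lt_uv (ltn_ord v.1)))
  (etrans (esym x0u) x0v).
split=> // r /gaps[c c2 neq]; exists (Ordinal (leq_trans c2 m_gt1)).
by rewrite !inE /= x0u eq_sym.
Qed.

Lemma card_stripe_partition k : #|stripe_partition k| <= chi_formula n k.
Proof.
pose f (x : V) := stripe_color n k x.1 x.2.
have sub : stripe_partition k \subset
    [set [set y in [set: V] | c == f y :> nat] | c : 'I_(chi_formula n k)].
  apply/subsetP => B /imsetP[x _ ->]; apply/imsetP.
  by exists (Ordinal (stripe_color_lt k x.2 (ltn_ord x.1))).
apply: leq_trans (subset_leq_card sub) _.
by apply: leq_trans (leq_imset_card _ _) _; rewrite card_ord.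
Qed.

End StrongProduct.

Theorem proposition5p1 (n m k : nat) :
  4 <= n -> 2 <= m -> 2 <= k -> k <= n - 2 ->
  is_chi_mu (@PK_adj n m) k (chi_formula n k).
Proof.
move=> _ m_gt1 k_gt1 _.
have valid := @stripe_partition_valid n m k m_gt1 (ltnW k_gt1).
have lower P := @chi_formula_le_partition n m k P (ltnW m_gt1) k_gt1.
split=> //; exists (stripe_partition n m k); split=> //.
by apply/eqP; rewrite eqn_leq card_stripe_partition lower.
Qed.
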